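(* For any metrized graph $\Gamma$ with $v$ vertices, $$2Kf(\Gamma)= v \cdot y(\Gamma)+\sum_{e_i \in E(\Gamma)} \frac{R_i}{L_i+R_i}\sum_{p \in V(\overline{\Gamma}_i)} r_{\overline{\Gamma}_i}(p,\bar p_i).$$
   Context: A metrized graph $\Gamma$ is a finite connected graph (multiple edges and self-loops allowed) each of whose edges is identified with a closed segment of positive length, with a finite nonempty vertex set $V(\Gamma)$ containing every point of valence $\neq2$; $v=\#V(\Gamma)$, $E(\Gamma)$ its edge set, $L_i$ the length of $e_i$. $r$ (resp. $r_\beta$) denotes effective resistance in $\Gamma$ (resp. in $\beta$), edges being resistors of resistance equal to length. For an edge $e_i$ with end points $p_i,q_i$: if $\Gamma-e_i$ (interior deleted) is connected, $R_i$ is the effective resistance between $p_i,q_i$ in $\Gamma-e_i$, $R_{a_i,p}=\hat j_{p_i}(p,q_i)$, $R_{b_i,p}=\hat j_{q_i}(p,p_i)$, with $\hat j_z(x,y)$ the voltage function of $\Gamma-e_i$ (potential at $x$ when unit current enters at $y$ and exits at $z$, potential $0$ at $z$); if $e_i$ is a bridge, $R_{a_i,p}=0,R_{b_i,p}=R_i$ for $p$ in the component of $\Gamma-e_i$ containing $p_i$, and $R_{a_i,p}=R_i,R_{b_i,p}=0$ otherwise, with every expression in $R_i$ interpreted as its limit as $R_i\to\infty$; for a self-loop $R_i=0$. $Kf(\Gamma)=\frac12\sum_{p,q\in V(\Gamma)}r(p,q)$. $\overline\Gamma_i$ is obtained by contracting $e_i$ to a point, with vertex set the image of $V(\Gamma)$,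 and $\bar p_i$ is the vertex into which $p_i$ (and $q_i$) is contracted. For a fixed vertex $p$ (independent of choice), $y(\Gamma)=\frac14\sum_{e_i}\frac{L_iR_i^2}{(L_i+R_i)^2}+\frac34\sum_{e_i}\frac{L_i(R_{a_i,p}-R_{b_i,p})^2}{(L_i+R_i)^2}$. *)

(* A metrized graph is modelled combinatorially: a finite
   vertex type V (the vertex set V(Gamma)), a finite edge type E, an endpoint
   map [ends : E -> V * V] (e |-> (p_e, q_e); multiple edges and self-loops
   allowed) and positive lengths [len : E -> R].  Resistances are computed in
   the associated resistor network (edge e = resistor of resistance len e). *)
From HB Require Import structures.
From mathcomp Require Import all_boot all_order all_algebra.
From mathcomp Require Import reals.
From Stdlib Require Import ClassicalEpsilon.

Set Implicit Arguments.
Unset Strict Implicit.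
Unset Printing Implicit Defensive.

Import Order.TTheory GRing.Theory Num.Theory.
Local Open Scope ring_scope.

Section Network.
Variables (R : realType) (V E : finType).
Variables (ends : E -> V * V) (len : E -> R).

Definition adj (F : {set E}) : rel V :=
  fun x y => [exists e in F, (((ends e).1 == x) && ((ends e).2 == y))
                          || (((ends e).1 == y) && ((ends e).2 == x))].

Definition connected_net (S : {set V}) (F : {set E}) : bool :=
  [forall x in S, forall y in S, connect (adj F) x y].

Definition outflow (F : {set E}) (phi : V -> R) (w : V) : R :=
  \sum_(e in F)
     (((ends e).1 == w)%:R * (phi (ends e).1 - phi (ends e).2)
      + ((ends e).2 == w)%:R * (phi (ends e).2 - phi (ends e).1)) / len e.

(* phi is the potential when a unit current enters at y and exits at z,
   grounded (potential 0) at z; potentials off S are set to 0. *)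
Definition is_voltage (S : {set V}) (F : {set E}) (z y : V) (phi : V -> R)
  : Prop :=
  phi z = 0 /\ (forall x, x \notin S -> phi x = 0) /\
  (forall w, w \in S -> outflow F phi w = (w == y)%:R - (w == z)%:R).

(* voltage function  j_z(x,y)  of the network (S,F) (unique when (S,F) is
   connected, z,y in S). *)
Definition voltage (S : {set V}) (F : {set E}) (z y x : V) : R :=
  epsilon (inhabits (fun _ : V => 0 : R)) (is_voltage S F z y) x.

Definition eff_res (S : {set V}) (F : {set E}) (x y : V) : R :=
  voltage S F y x x.

Definition Kf : R :=
  2^-1 * \sum_(p : V) \sum_(q : V) eff_res [set: V] [set: E] p q.

Definition delF (e : E) : {set E} := [set~ e].

Definition is_bridge (e : E) : bool := ~~ connected_net [set: V] (delF e).

Definition Rdel (e : E) : R := eff_res [set: V] (delF e) (ends e).1 (ends e).2.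

Definition Ra (e : E) (p : V) : R :=
  voltage [set: V] (delF e) (ends e).1 (ends e).2 p.
Definition Rb (e : E) (p : V) : R :=
  voltage [set: V] (delF e) (ends e).2 (ends e).1 p.

(* For a bridge, R_i = +oo and the expressions are
   replaced by their limits as R_i -> +oo:
     L R^2/(L+R)^2 -> L,   R/(L+R) -> 1,
     L (R_a - R_b)^2/(L+R)^2 -> L  (since {R_a,R_b} = {0,R_i}). *)
Definition ytermA (e : E) : R :=
  if is_bridge e then len e
  else len e * Rdel e ^+ 2 / (len e + Rdel e) ^+ 2.

Definition ytermB (e : E) (p : V) : R :=
  if is_bridge e then len e
  else len e * (Ra e p - Rb e p) ^+ 2 / (len e + Rdel e) ^+ 2.

Definition weight (e : E) : R :=
  if is_bridge e then 1 else Rdel e / (len e + Rdel e).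

(* y(Gamma), computed with the fixed vertex p *)
Definition y_inv (p : V) : R :=
  4^-1 * \sum_(e : E) ytermA e + (3%:R / 4%:R) * \sum_(e : E) ytermB e p.

(* Contraction Gamma_bar_i of e_i = (a,b): q_i = b is identified with p_i = a
   (nothing happens to vertices if e_i is a self-loop); the vertex set is the
   image of V, edges are E - e_i with endpoints mapped, and bar p_i = a. *)
Definition contr_map (e : E) (x : V) : V :=
  if x == (ends e).2 then (ends e).1 else x.

Definition contr_V (e : E) : {set V} :=
  if (ends e).1 == (ends e).2 then [set: V] else [set~ (ends e).2].

Definition contr_ends (e : E) (e' : E) : V * V :=
  (contr_map e (ends e').1, contr_map e (ends e').2).

End Network.

Definition contr_res (R : realType) (V E : finType) (ends : E -> V * V)
  (len : E -> R) (e : E) (x y : V) : R :=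
  eff_res (contr_ends ends e) len (contr_V ends e) (delF e) x y.

(* Everything is computed from the Green function G of Gamma: the mean-zero
   symmetric kernel with Laplacian delta_y - 1/n.  The voltages of Gamma are
   j_z(x,y) = G(y,x) - G(z,x) - G(y,z) + G(z,z); those of Gamma - e_i are the
   multiple L_i / (L_i - r_i) of those of Gamma, and those of the contraction
   are obtained from j_{p_i} by subtracting the multiple of j_{p_i}(., q_i)
   that grounds q_i (r_i is the resistance between p_i and q_i in Gamma).
   Both sides of the identity then become combinations of the trace
   T = sum_x G(x,x), the Dirichlet energy of x |-> G(x,x),
   sum_i r_i^2 / L_i and sum_i r_i (G(p_i,p_i) + G(q_i,q_i)) / L_i.  Foster's
   theorem sum_i r_i / L_i = n - 1 and two more summations by parts reduce
   both sides to 2 n T. *)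

From Pilot Require Import Defs.
From HB Require Import structures.
From mathcomp Require Import all_boot all_order all_algebra.
From mathcomp Require Import reals ring.
From Stdlib Require Import ClassicalEpsilon.
Set Implicit Arguments.
Unset Strict Implicit.
Unset Printing Implicit Defensive.
Import Order.TTheory GRing.Theory Num.Theory.
Local Open Scope ring_scope.

Lemma sum_indicator_mul (R : pzSemiRingType) (T : finType) (a : T) (f : T -> R) :
  \sum_w (a == w)%:R * f w = f a.
Proof.
rewrite (bigD1 a) //= eqxx mul1r big1 ?addr0 // => w /negbTE.
by rewrite eq_sym => ->; rewrite mul0r.
Qed.

Lemma linear_surjective (K : fieldType) (vT : vectType K) (f : vT -> vT) :
  linear f -> (forall u, f u = 0 -> u = 0) -> forall v, exists u, f u = v.
Proof.
move=> linf ker_f v.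
pose fL : {linear vT -> vT} := HB.pack f (GRing.isLinear.Build _ _ _ _ f linf).
have ker0 : lker (linfun fL) == 0%VS.
  by apply/lker0P => x y; rewrite !lfunE; apply: (@raddf_inj _ _ fL).
by exists ((linfun fL)^-1%VF v); have := lker0_lfunVK ker0 v; rewrite lfunE.
Qed.

Lemma connect_constant (T : finType) (T' : Type) (r : rel T) (f : T -> T') :
  (forall u v, r u v -> f u = f v) -> forall x y, connect r x y -> f x = f y.
Proof.
move=> fr x y /connectP [s rs ->]; elim: s x rs => [|z s IHs] x //=.
by case/andP=> /fr -> /IHs.
Qed.

Lemma connect_homo (T T' : finType) (r : rel T) (r' : rel T') (f : T -> T') :
  (forall u v, r u v -> connect r' (f u) (f v)) ->
  forall x y, connect r x y -> connect r' (f x) (f y).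
Proof.
move=> fr x y /connectP [s rs ->]; elim: s x rs => [|z s IHs] x /=.
  by rewrite connect0.
by case/andP=> /fr rxz /IHs; apply: connect_trans.
Qed.

Section Network.
Variables (R : realType) (V E : finType).
Variables (ends : E -> V * V) (len : E -> R).
Hypothesis len_pos : forall e, 0 < len e.

Local Notation outflow := (outflow ends len).

Lemma adj_sym (F : {set E}) : symmetric (adj ends F).
Proof. by move=> x y; apply: eq_existsb => e; rewrite orbC. Qed.

Lemma eq_outflow (F : {set E}) (phi psi : V -> R) :
  phi =1 psi -> outflow F phi =1 outflow F psi.
Proof. by move=> eq_phi w; apply: eq_bigr => e _; rewrite !eq_phi. Qed.

Lemma outflowD (F : {set E}) (phi psi : V -> R) w :
  outflow F (fun x => phi x + psi x) w = outflow F phi w + outflow F psi w.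
Proof. by rewrite -big_split; apply: eq_bigr => e _ /=; ring. Qed.

Lemma outflowB (F : {set E}) (phi psi : V -> R) w :
  outflow F (fun x => phi x - psi x) w = outflow F phi w - outflow F psi w.
Proof. by rewrite -sumrB; apply: eq_bigr => e _ /=; ring. Qed.

Lemma outflowZ (F : {set E}) (phi : V -> R) k w :
  outflow F (fun x => k * phi x) w = k * outflow F phi w.
Proof. by rewrite mulr_sumr; apply: eq_bigr => e _ /=; ring. Qed.

Lemma outflow_cst (F : {set E}) (c : R) w : outflow F (fun _ => c) w = 0.
Proof. by rewrite /Defs.outflow big1 // => e _; rewrite !subrr; ring. Qed.

Lemma outflow_setT_delF e phi w : outflow [set: E] phi w = outflow (delF e) phi w +
   (((ends e).1 == w)%:R * (phi (ends e).1 - phi (ends e).2)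
    + ((ends e).2 == w)%:R * (phi (ends e).2 - phi (ends e).1)) / len e.
Proof.
rewrite /Defs.outflow (bigD1 e) ?inE //= addrC; congr (_ + _).
by apply: eq_bigl => e'; rewrite !inE.
Qed.

Lemma sum_incidence (F : {set E}) (X Y : E -> V -> R) :
  \sum_w \sum_(e in F) (((ends e).1 == w)%:R * X e w + ((ends e).2 == w)%:R * Y e w)
  = \sum_(e in F) (X e (ends e).1 + Y e (ends e).2).
Proof. by rewrite exchange_big; apply: eq_bigr => e _; rewrite big_split !sum_indicator_mul. Qed.

Lemma sum_mul_outflow (F : {set E}) (phi psi : V -> R) :
  \sum_w phi w * outflow F psi w =
  \sum_(e in F) (phi (ends e).1 - phi (ends e).2) * (psi (ends e).1 - psi (ends e).2) / len e.
Proof.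
rewrite (eq_bigr (fun w => \sum_(e in F)
   (((ends e).1 == w)%:R * (phi w * (psi (ends e).1 - psi (ends e).2) / len e)
  + ((ends e).2 == w)%:R * (phi w * (psi (ends e).2 - psi (ends e).1) / len e)))).
  by rewrite sum_incidence; apply: eq_bigr => e _; ring.
by move=> w _; rewrite mulr_sumr; apply: eq_bigr => e _; ring.
Qed.

Lemma sum_mul_outflowC (F : {set E}) (phi psi : V -> R) :
  \sum_w phi w * outflow F psi w = \sum_w psi w * outflow F phi w.
Proof. by rewrite !sum_mul_outflow; apply: eq_bigr => e _; ring. Qed.

Lemma sum_outflow (F : {set E}) phi : \sum_w outflow F phi w = 0.
Proof.
rewrite -(eq_bigr _ (fun w _ => mul1r (outflow F phi w))) sum_mul_outflow.
by rewrite big1 // => e _; ring.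
Qed.

Lemma sum_outflow_diag (F : {set E}) (H : V -> V -> R) :
  \sum_w outflow F (H w) w =
  \sum_(e in F) (H (ends e).1 (ends e).1 - H (ends e).1 (ends e).2
     + H (ends e).2 (ends e).2 - H (ends e).2 (ends e).1) / len e.
Proof.
rewrite (eq_bigr (fun w => \sum_(e in F)
   (((ends e).1 == w)%:R * ((H w (ends e).1 - H w (ends e).2) / len e)
  + ((ends e).2 == w)%:R * ((H w (ends e).2 - H w (ends e).1) / len e)))).
  by rewrite sum_incidence; apply: eq_bigr => e _; ring.
by move=> w _; apply: eq_bigr => e _; ring.
Qed.

Lemma connected_net_connect S (F : {set E}) x y :
  connected_net ends S F -> x \in S -> y \in S -> connect (adj ends F) x y.
Proof. by move=> /forallP /(_ x) /implyP cSF /cSF /forallP /(_ y) /implyP. Qed.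

Lemma energy0_edge (F : {set E}) (phi : V -> R) :
  \sum_w phi w * outflow F phi w = 0 ->
  forall e, e \in F -> phi (ends e).1 = phi (ends e).2.
Proof.
rewrite sum_mul_outflow => E0 e eF.
have ge0 e' :
    0 <= (phi (ends e').1 - phi (ends e').2) * (phi (ends e').1 - phi (ends e').2) / len e'.
  by rewrite divr_ge0 -?expr2 ?sqr_ge0 // ltW.
have := psumr_eq0P (fun e' _ => ge0 e') E0 eF.
move/eqP; rewrite -expr2 mulf_eq0 invr_eq0 (gt_eqF (len_pos e)) orbF.
by rewrite sqrf_eq0 subr_eq0 => /eqP.
Qed.

Lemma harmonic_eq0 S F z phi :
  connected_net ends S F -> z \in S -> phi z = 0 ->
  (forall x, x \notin S -> phi x = 0) ->
  (forall w, w \in S -> outflow F phi w = 0) -> forall x, phi x = 0.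
Proof.
move=> connSF zS phiz0 phi_out harm x.
have phi_adj u v : adj ends F u v -> phi u = phi v.
  have /energy0_edge phi_edge : \sum_w phi w * outflow F phi w = 0.
    by apply: big1 => w _; case: (boolP (w \in S)) => [/harm|/phi_out] ->; rewrite ?mulr0 ?mul0r.
  by case/existsP=> e /andP[eF /orP[] /andP[/eqP <- /eqP <-]]; rewrite phi_edge.
case: (boolP (x \in S)) => [xS|/phi_out //]; rewrite -phiz0; symmetry.
exact: (connect_constant phi_adj (connected_net_connect connSF zS xS)).
Qed.

Lemma voltageE S F z y phi :
  connected_net ends S F -> z \in S -> is_voltage ends len S F z y phi ->
  voltage ends len S F z y =1 phi.
Proof.
move=> connSF zS phi_volt.
have := epsilon_spec (inhabits (fun _ : V => 0 : R)) (is_voltage ends len S F z y)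
  (ex_intro _ phi phi_volt).
rewrite /voltage; set psi := epsilon _ _ => -[psi_z [psi_out psi_flow]].
case: phi_volt => [phi_z [phi_out phi_flow]] x.
apply/eqP; rewrite -subr_eq0; apply/eqP.
apply: (harmonic_eq0 (phi := fun x => psi x - phi x) connSF zS) => /=.
- by rewrite psi_z phi_z subrr.
- by move=> u uS; rewrite psi_out // phi_out // subrr.
- by move=> w wS; rewrite outflowB psi_flow // phi_flow // subrr.
Qed.

End Network.

Lemma natr_card_neq0 (R : numDomainType) (T : finType) (x : T) : #|T|%:R != 0 :> R.
Proof. by rewrite pnatr_eq0 -lt0n; apply/card_gt0P; exists x. Qed.

Section Green.
Variables (R : realType) (V E : finType).
Variables (ends : E -> V * V) (len : E -> R).
Hypothesis len_pos : forall e, 0 < len e.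
Hypothesis Gconn : connected_net ends [set: V] [set: E].

Local Notation outflow := (outflow ends len [set: E]).
Local Notation n := (#|V|%:R : R).

(* h |-> Delta h + mean h is injective, since harmonic functions on a connected
   network are constant; hence it is onto. *)
Lemma green_exists y : exists h : V -> R,
  (forall w, outflow h w = (w == y)%:R - n^-1) /\ \sum_x h x = 0.
Proof.
have n0 := natr_card_neq0 R y.
pose L (h : {ffun V -> R^o}) : {ffun V -> R^o} :=
  [ffun w => outflow h w + (\sum_u h u) / n].
have sumL h : \sum_w L h w = \sum_u h u.
  rewrite (eq_bigr _ (fun w _ => ffunE _ w)) big_split /= sum_outflow add0r.
  by rewrite sumr_const; field.
have linL : linear L.
  move=> k f g; apply/ffunP => w; rewrite !ffunE.
  rewrite (eq_outflow ends len _ (psi := fun x => k * f x + g x)) => [|x]; last by rewrite !ffunE.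
  under [\sum_u _]eq_bigr do rewrite !ffunE.
  rewrite outflowD outflowZ big_split -mulr_sumr /=.
  rewrite [k *: _]/GRing.scale /=; ring.
have kerL h : L h = 0 -> h = 0.
  move=> Lh0; have sum0 : \sum_u h u = 0 by rewrite -sumL Lh0 big1 // => w _; rewrite ffunE.
  have harm w : outflow h w = 0.
    by have := congr1 (fun f : {ffun V -> R^o} => f w) Lh0; rewrite /= !ffunE sum0 mul0r addr0.
  have hy x : h x - h y = 0.
    apply: (harmonic_eq0 len_pos (phi := fun x => h x - h y) Gconn (in_setT y)) => //=.
    - by rewrite subrr.
    - by move=> u; rewrite in_setT.
    - by move=> w _; rewrite outflowB outflow_cst harm subrr.
  have hconst x : h x = h y by apply/eqP; rewrite -subr_eq0 hy.
  have /eqP : n * h y = 0 by rewrite -sum0 (eq_bigr _ (fun x _ => hconst x)) sumr_const mulr_natl.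
  rewrite mulf_eq0 (negbTE n0) /= => /eqP hy0.
  by apply/ffunP => x; rewrite hconst hy0 ffunE.
have [h Lh] := linear_surjective linL kerL [ffun w => (w == y)%:R - n^-1].
have sum0 : \sum_u h u = 0.
  rewrite -sumL Lh (eq_bigr _ (fun w _ => ffunE _ w)) sumrB sumr_const.
  rewrite (bigD1 y) //= eqxx big1 ?addr0 => [|w /negbTE ->] //.
  by rewrite -[_ *+ #|_|]mulr_natr mulVf // subrr.
exists h; split => // w.
by have := congr1 (fun f : {ffun V -> R^o} => f w) Lh; rewrite /= !ffunE sum0 mul0r addr0.
Qed.

Definition green (y : V) : V -> R :=
  proj1_sig (constructive_indefinite_description _ (green_exists y)).

Lemma outflow_green y w : outflow (green y) w = (w == y)%:R - n^-1.
Proof. by case: (proj2_sig (constructive_indefinite_description _ (green_exists y))). Qed.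

Lemma sum_green y : \sum_x green y x = 0.
Proof. by case: (proj2_sig (constructive_indefinite_description _ (green_exists y))). Qed.

Lemma sum_mul_indicator_mean (f : V -> R) y :
  \sum_w f w * ((w == y)%:R - n^-1) = f y - n^-1 * \sum_w f w.
Proof.
under eq_bigr => w _ do rewrite eq_sym mulrBr mulrC.
by rewrite sumrB sum_indicator_mul mulr_sumr; under eq_bigr do rewrite mulrC.
Qed.

Lemma sum_mul_outflow_green (f : V -> R) y :
  \sum_w f w * outflow (green y) w = f y - n^-1 * \sum_w f w.
Proof. by under eq_bigr do rewrite outflow_green; rewrite sum_mul_indicator_mean. Qed.

Lemma greenC x y : green x y = green y x.
Proof.
have := sum_mul_outflowC ends len [set: E] (green x) (green y).
by rewrite !sum_mul_outflow_green !sum_green !mulr0 !subr0.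
Qed.

Definition volt (z y x : V) : R := green y x - green z x - green y z + green z z.

Lemma outflow_volt z y w : outflow (volt z y) w = (w == y)%:R - (w == z)%:R.
Proof.
rewrite (eq_outflow ends len _ (psi := fun x => (green y x - green z x) - (green y z - green z z))).
  by rewrite outflowB outflow_cst subr0 outflowB !outflow_green; ring.
by move=> x; rewrite /volt; ring.
Qed.

Lemma is_voltage_volt z y : is_voltage ends len [set: V] [set: E] z y (volt z y).
Proof.
split; first by rewrite /volt; ring.
by split=> [x|w _]; rewrite ?in_setT ?outflow_volt.
Qed.

Lemma voltage_volt z y : voltage ends len [set: V] [set: E] z y =1 volt z y.
Proof. exact: (voltageE len_pos Gconn (in_setT z) (is_voltage_volt z y)). Qed.

Lemma eff_res_volt x y : eff_res ends len [set: V] [set: E] x y = volt y x x.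
Proof. exact: voltage_volt. Qed.

Lemma voltC z y x : volt z y x = volt z x y.
Proof. by rewrite /volt (greenC y x) (greenC z x) (greenC z y); ring. Qed.

End Green.

Section Edge.
Variables (R : realType) (V E : finType).
Variables (ends : E -> V * V) (len : E -> R).
Hypothesis len_pos : forall e, 0 < len e.
Hypothesis Gconn : connected_net ends [set: V] [set: E].
Variable e : E.

Local Notation a := (ends e).1.
Local Notation b := (ends e).2.
Local Notation L := (len e).
Local Notation j := (volt len_pos Gconn).
Local Notation r := (j b a a).

Lemma len_neq0 : L != 0. Proof. by rewrite gt_eqF. Qed.

Lemma volt_ends : j a b b = r.
Proof. by rewrite /volt; ring. Qed.

Lemma volt_swap x : j b a x = r - j a b x.
Proof. by rewrite /volt; ring. Qed.

Lemma outflow_delF_volt z y w : (z = a /\ y = b) \/ (z = b /\ y = a) ->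
  outflow ends len (delF e) (j z y) w = ((w == y)%:R - (w == z)%:R) * (1 - r / L).
Proof.
move=> zy; have := outflow_setT_delF ends len e (j z y) w; rewrite outflow_volt.
move/esym/(canRL (addrK _)) ->; rewrite (eq_sym a) (eq_sym b).
by case: zy => -[-> ->]; rewrite /volt; field; exact: len_neq0.
Qed.

(* If r = L, the voltage j_a(., b) of Gamma would be a voltage of Gamma - e
   for zero current, hence zero, so that r = j_a(b, b) = 0. *)
Lemma len_sub_res_neq0 : ~~ is_bridge ends e -> L - r != 0.
Proof.
rewrite negbK => conn_del; apply: (contraNneq _ len_neq0).
move/eqP; rewrite subr_eq0 => /eqP rL; apply/eqP.
rewrite rL -volt_ends; apply: (harmonic_eq0 len_pos conn_del (in_setT a)) => [|x|w _].
- by rewrite /volt; ring.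
- by rewrite in_setT.
- rewrite outflow_delF_volt; last by left.
  by rewrite -rL divff ?len_neq0 // subrr mulr0.
Qed.

Lemma voltage_delF z y : ~~ is_bridge ends e -> (z = a /\ y = b) \/ (z = b /\ y = a) ->
  voltage ends len [set: V] (delF e) z y =1 (fun x => L / (L - r) * j z y x).
Proof.
move=> nbr zy; apply: (voltageE len_pos); first by rewrite negbK in nbr.
  exact: in_setT.
split; first by case: zy => -[-> ->]; rewrite /volt; ring.
split=> [x|w _]; first by rewrite in_setT.
rewrite outflowZ outflow_delF_volt //.
by field; rewrite len_neq0 len_sub_res_neq0.
Qed.

Lemma Rdel_volt : ~~ is_bridge ends e -> Rdel ends len e = L * r / (L - r).
Proof.
by move=> nbr; rewrite /Rdel /eff_res voltage_delF //; [rewrite mulrAC | right].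
Qed.

Lemma bridge_disconnects : is_bridge ends e -> ~~ connect (adj ends (delF e)) a b.
Proof.
move=> br; apply/negP => ab_conn; move/negP: br; apply.
apply/forallP => x; apply/implyP => _; apply/forallP => y; apply/implyP => _.
apply: connect_sub (connected_net_connect Gconn (in_setT x) (in_setT y)).
move=> u v /existsP [e' /andP [_ uv]].
case: (eqVneq e' e) uv => [-> /orP[] /andP[/eqP <- /eqP <-] //|ne uv].
  by rewrite (sym_connect_sym (adj_sym ends (delF e))).
by apply: connect1; apply/existsP; exists e'; rewrite !inE ne uv.
Qed.

Lemma volt_bridge : is_bridge ends e ->
  forall x, j a b x = if connect (adj ends (delF e)) a x then 0 else L.
Proof.
move=> br x; rewrite -(voltage_volt len_pos Gconn); move: x.
apply: (voltageE len_pos Gconn (in_setT a)).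
split; first by rewrite connect0.
split=> [u|w _]; first by rewrite in_setT.
rewrite (outflow_setT_delF _ _ e) /Defs.outflow big1 ?add0r => [|e' e'F].
  rewrite connect0 (negbTE (bridge_disconnects br)) (eq_sym a) (eq_sym b).
  by field; exact: len_neq0.
have adj_e' : adj ends (delF e) (ends e').1 (ends e').2.
  by apply/existsP; exists e'; rewrite e'F !eqxx.
rewrite (same_connect_r (sym_connect_sym (adj_sym ends (delF e))) (connect1 adj_e')).
by rewrite !subrr !mulr0 addr0 mul0r.
Qed.

Lemma bridge_ends_neq : is_bridge ends e -> a != b.
Proof. by move/bridge_disconnects; apply: contraNneq => ->; rewrite connect0. Qed.

Lemma res_bridge : is_bridge ends e -> r = L.
Proof.
move=> br; rewrite -volt_ends.
by rewrite volt_bridge // (negbTE (bridge_disconnects br)).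
Qed.

Lemma res_edge_neq0 : a != b -> r != 0.
Proof.
move=> ab; apply/negP => /eqP r0.
have energy0 : \sum_w j a b w * outflow ends len [set: E] (j a b) w = 0.
  under eq_bigr => w _ do rewrite outflow_volt mulrBr !(mulrC _ (_ == _)%:R) !(eq_sym w).
  by rewrite sumrB !sum_indicator_mul -[RHS]r0 /volt; ring.
have := outflow_volt len_pos Gconn a b b.
rewrite eqxx eq_sym (negbTE ab) subr0 /Defs.outflow big1 => [/eqP|e' _].
  by rewrite eq_sym oner_eq0.
by rewrite (energy0_edge len_pos energy0) ?in_setT // !subrr !mulr0 addr0 mul0r.
Qed.

Lemma contr_V_neq : a != b -> contr_V ends e = [set~ b].
Proof. by rewrite /contr_V => /negbTE ->. Qed.

Lemma contr_connected : a != b ->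
  connected_net (contr_ends ends e) (contr_V ends e) (delF e).
Proof.
move=> ab; rewrite contr_V_neq //.
apply/forallP => x; apply/implyP; rewrite !inE => xb.
apply/forallP => y; apply/implyP; rewrite !inE => yb.
have := connected_net_connect Gconn (in_setT x) (in_setT y).
move/(connect_homo (f := contr_map ends e) (r' := adj (contr_ends ends e) (delF e))).
rewrite /contr_map (negbTE xb) (negbTE yb); apply=> u v /existsP [e' /andP [_ uv]].
case: (eqVneq e' e) uv => [-> | ne uv].
  by case/orP=> /andP[/eqP <- /eqP <-]; rewrite /contr_map eqxx (negbTE ab) connect0.
apply: connect1; apply/existsP; exists e'; rewrite !inE ne /contr_ends /=.
by case/orP: uv => /andP [/eqP -> /eqP ->]; rewrite !eqxx ?orbT.
Qed.

Lemma outflow_contr phi w : phi a = phi b -> w != b ->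
  outflow (contr_ends ends e) len (delF e) phi w =
  outflow ends len [set: E] phi w + (a == w)%:R * outflow ends len [set: E] phi b.
Proof.
move=> phi_ab wb.
have phi_contr v : phi (contr_map ends e v) = phi v.
  by rewrite /contr_map; case: eqP => [->|].
have contr_eq v : ((contr_map ends e v == w)%:R : R) =
    (v == w)%:R + (a == w)%:R * (v == b)%:R.
  rewrite /contr_map; case: (eqVneq v b) => [->|_]; last by rewrite mulr0 addr0.
  by rewrite (eq_sym b) (negbTE wb) add0r mulr1.
rewrite !(outflow_setT_delF _ _ e) phi_ab !subrr !mulr0 !addr0 !mul0r !addr0.
rewrite /Defs.outflow /contr_ends /= mulr_sumr -big_split; apply: eq_bigr => e' _.
by rewrite !phi_contr !contr_eq /=; ring.
Qed.

Lemma voltage_contr x : a != b -> x != b ->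
  voltage (contr_ends ends e) len (contr_V ends e) (delF e) a x =1
  (fun u => j a x u - j a x b / r * j a b u).
Proof.
move=> ab xb.
have r0 := res_edge_neq0 ab.
apply: (voltageE len_pos (contr_connected ab)); first by rewrite contr_V_neq // !inE.
split; first by rewrite /volt; ring.
split=> [v|w].
  by rewrite contr_V_neq // !inE negbK => /eqP ->; rewrite volt_ends divfK // subrr.
rewrite contr_V_neq // !inE => wb.
rewrite outflow_contr //; last by rewrite volt_ends divfK // /volt; ring.
rewrite !outflowB !outflowZ !outflow_volt eqxx (negbTE wb) (eq_sym b a) (negbTE ab).
by rewrite (eq_sym b x) (negbTE xb) (eq_sym a w) /=; ring.
Qed.

Lemma sum_contr_res : a != b ->
  \sum_(x in contr_V ends e) contr_res ends len e x a =
  \sum_x (j a x x - j a x b / r * j a b x).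
Proof.
move=> ab.
rewrite [RHS](bigD1 b) //= volt_ends divfK ?res_edge_neq0 // subrr add0r contr_V_neq //.
apply: eq_big => [x|x]; first by rewrite !inE.
by rewrite !inE => xb; rewrite /contr_res /eff_res voltage_contr.
Qed.

Lemma len_add_Rdel : ~~ is_bridge ends e -> L + Rdel ends len e = L ^+ 2 / (L - r).
Proof. by move=> nbr; rewrite Rdel_volt //; field; exact: len_sub_res_neq0. Qed.

Lemma ytermA_volt : ytermA ends len e = r ^+ 2 / L.
Proof.
rewrite /ytermA; case: ifP => br; first by rewrite res_bridge // expr2 mulfK ?len_neq0.
rewrite len_add_Rdel ?Rdel_volt ?br //.
by field; rewrite len_neq0 len_sub_res_neq0 ?br.
Qed.

Lemma ytermB_volt p : ytermB ends len e p = (j a b p - j b a p) ^+ 2 / L.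
Proof.
rewrite /ytermB; case: ifP => br.
  rewrite volt_swap res_bridge // volt_bridge //.
  by case: ifP => _; field; exact: len_neq0.
rewrite len_add_Rdel ?Rdel_volt ?br // /Ra /Rb !voltage_delF ?br //; [|by right|by left].
by field; rewrite len_neq0 len_sub_res_neq0 ?br.
Qed.

Lemma weight_contr_volt :
  weight ends len e * \sum_(x in contr_V ends e) contr_res ends len e x a
  = (r * \sum_x j a x x - \sum_x j a b x ^+ 2) / L.
Proof.
have contr_sumE : a != b -> r / L * \sum_(x in contr_V ends e) contr_res ends len e x a
    = (r * \sum_x j a x x - \sum_x j a b x ^+ 2) / L.
  move=> ab; rewrite sum_contr_res // mulr_sumr [in RHS]mulr_sumr -sumrB mulr_suml.
  by apply: eq_bigr => x _; rewrite voltC; field; rewrite res_edge_neq0 ?len_neq0.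
rewrite /weight; case: ifP => br.
  by rewrite -contr_sumE ?bridge_ends_neq // res_bridge // divff ?len_neq0.
have -> : Rdel ends len e / (L + Rdel ends len e) = r / L.
  rewrite len_add_Rdel ?Rdel_volt ?br //.
  by field; rewrite len_neq0 len_sub_res_neq0 ?br.
have [ab|] := eqVneq a b; last exact: contr_sumE.
have r0 : r = 0 by rewrite /volt ab; ring.
rewrite r0 !mul0r sub0r big1 ?oppr0 ?mul0r // => x _.
by rewrite /volt ab subrr sub0r addNr expr0n.
Qed.

End Edge.

Section Kirchhoff.
Variables (R : realType) (V E : finType).
Variables (ends : E -> V * V) (len : E -> R).
Hypothesis len_pos : forall e, 0 < len e.
Hypothesis Gconn : connected_net ends [set: V] [set: E].
Variable p : V.

Local Notation G := (green len_pos Gconn).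
Local Notation j := (volt len_pos Gconn).
Local Notation n := (#|V|%:R : R).
Local Notation g x := (G x x).
Local Notation T := (\sum_x g x).
Local Notation res e := (j (ends e).2 (ends e).1 (ends e).1).
Local Notation dg x e :=
  (g (ends e).1 - 2 * G x (ends e).1 - (g (ends e).2 - 2 * G x (ends e).2)).
Local Notation Q := (\sum_e (g (ends e).1 - g (ends e).2) ^+ 2 / len e).
Local Notation A := (\sum_e res e ^+ 2 / len e).
Local Notation P := (\sum_e res e * (g (ends e).1 + g (ends e).2) / len e).

Lemma n_neq0 : n != 0. Proof. exact: natr_card_neq0 p. Qed.

Lemma sum_volt_diag a : \sum_x j a x x = T + n * g a.
Proof.
rewrite (eq_bigr (fun x => g x - 2 * G a x + g a)) => [|x _]; last first.
  by rewrite /volt (greenC _ _ x a); ring.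
by rewrite big_split sumrB /= -mulr_sumr sum_green mulr0 subr0 sumr_const mulr_natl.
Qed.

Lemma sum_eff_res : \sum_x \sum_y eff_res ends len [set: V] [set: E] x y = 2 * n * T.
Proof.
rewrite (eq_bigr (fun x => T + n * g x)) => [|x _]; last first.
  rewrite -sum_volt_diag; apply: eq_bigr => y _.
  by rewrite eff_res_volt /volt (greenC _ _ y x); ring.
by rewrite big_split /= -mulr_sumr sumr_const mulr_natl; ring.
Qed.

Lemma volt_antisym x e :
  j (ends e).1 (ends e).2 x - j (ends e).2 (ends e).1 x = dg x e.
Proof. by rewrite /volt !(greenC _ _ x) (greenC _ _ (ends e).2 (ends e).1); ring. Qed.

Lemma sum_volt_antisym e :
  \sum_x (j (ends e).1 (ends e).2 x - j (ends e).2 (ends e).1 x)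
  = n * (g (ends e).1 - g (ends e).2).
Proof.
under eq_bigr do rewrite volt_antisym.
rewrite (eq_bigr (fun x => g (ends e).1 - g (ends e).2 - 2 * (G (ends e).1 x - G (ends e).2 x)))
  => [|x _]; last by rewrite !(greenC _ _ x); ring.
by rewrite sumrB -mulr_sumr [X in 2 * X]sumrB !sum_green subrr mulr0 subr0 sumr_const mulr_natl.
Qed.

Lemma foster : \sum_e res e / len e = n - 1.
Proof.
have := sum_outflow_diag ends len [set: E] G.
under eq_bigr do rewrite outflow_green eqxx.
rewrite sumr_const -[_ *+ #|_|]mulr_natr mulrBl mulVf ?n_neq0 // mul1r => ->.
by apply: eq_big => [e|e _]; rewrite ?inE // /volt; ring.
Qed.

Lemma sum_dg2 x : \sum_e dg x e ^+ 2 / len e = Q + 4 * T / n.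
Proof.
pose phi w := g w - 2 * G x w.
have out_phi w : outflow ends len [set: E] phi w =
    outflow ends len [set: E] (fun w => g w) w - 2 * ((w == x)%:R - n^-1).
  by rewrite outflowB outflowZ outflow_green.
have energy_g : \sum_w g w * outflow ends len [set: E] (fun w => g w) w = Q.
  by rewrite sum_mul_outflow; apply: eq_big => [e|e _]; rewrite ?inE ?expr2.
have cross : \sum_w G x w * outflow ends len [set: E] (fun w => g w) w = g x - n^-1 * T.
  by rewrite sum_mul_outflowC sum_mul_outflow_green.
transitivity (\sum_w phi w * outflow ends len [set: E] phi w).
  by rewrite sum_mul_outflow; apply: eq_big => [e|e _]; rewrite ?inE ?expr2.
rewrite (eq_bigr (fun w => g w * outflow ends len [set: E] (fun w => g w) w
  - 2 * (G x w * outflow ends len [set: E] (fun w => g w) w)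
  - 2 * (phi w * ((w == x)%:R - n^-1)))) => [|w _]; last by rewrite out_phi /phi; ring.
rewrite !sumrB -!mulr_sumr energy_g cross sum_mul_indicator_mean.
rewrite /phi sumrB -mulr_sumr sum_green mulr0 subr0.
by field; exact: n_neq0.
Qed.

Lemma Q_add_P : Q + P = 2 * T * (1 - n^-1).
Proof.
have := sum_outflow_diag ends len [set: E] (fun w u => g w * G w u).
under eq_bigr do rewrite outflowZ outflow_green eqxx.
rewrite -mulr_suml -mulrA (_ : T * (1 - n^-1) = T * (true%:R - n^-1)) // => ->.
rewrite -big_split mulr_sumr; apply: eq_big => [e|e _]; rewrite ?inE // /volt.
by rewrite /= (greenC _ _ (ends e).2 (ends e).1); field; exact: len_neq0.
Qed.

Lemma twice_Kf : 2 * Kf ends len = 2 * n * T.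
Proof. by rewrite /Kf sum_eff_res mulrA divff ?mul1r // pnatr_eq0. Qed.

Lemma y_inv_green : y_inv ends len p = A / 4 + 3 / 4 * (Q + 4 * T / n).
Proof.
rewrite /y_inv (eq_bigr _ (fun e _ => ytermA_volt len_pos Gconn e)).
rewrite (eq_bigr _ (fun e _ => ytermB_volt len_pos Gconn e p)).
rewrite (eq_bigr _ (fun e _ => congr1 (fun d => d ^+ 2 / len e) (volt_antisym p e))).
by rewrite sum_dg2 mulrC.
Qed.

Lemma weight_contr_green e :
  weight ends len e * \sum_(x in contr_V ends e) contr_res ends len e x (ends e).1 =
  T * (res e / len e) + n / 2 * (res e * (g (ends e).1 + g (ends e).2) / len e)
  - (\sum_x dg x e ^+ 2) / (4 * len e) - n / 4 * (res e ^+ 2 / len e).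
Proof.
rewrite weight_contr_volt sum_volt_diag.
have sqr_volt x : j (ends e).1 (ends e).2 x ^+ 2 =
    ((j (ends e).1 (ends e).2 x - j (ends e).2 (ends e).1 x) ^+ 2
     + 2 * res e * (j (ends e).1 (ends e).2 x - j (ends e).2 (ends e).1 x) + res e ^+ 2) / 4.
  by rewrite volt_swap; field.
rewrite (eq_bigr _ (fun x _ => sqr_volt x)) -mulr_suml !big_split /= -mulr_sumr.
rewrite sum_volt_antisym sumr_const.
rewrite (eq_bigr _ (fun x _ => congr1 (fun d => d ^+ 2) (volt_antisym x e))).
by field; exact: len_neq0.
Qed.

Lemma sum_weight_contr :
  \sum_e weight ends len e * \sum_(x in contr_V ends e) contr_res ends len e x (ends e).1 =
  T * (n - 1) + n / 2 * P - n / 4 * (Q + 4 * T / n) - n / 4 * A.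
Proof.
under eq_bigr do rewrite weight_contr_green.
rewrite !sumrB big_split /= -!mulr_sumr foster.
rewrite [X in _ - X - _](eq_bigr (fun e => 4^-1 * \sum_x dg x e ^+ 2 / len e))
  => [|e _]; last first.
  by rewrite mulr_sumr mulr_suml; apply: eq_bigr => x _; field; exact: len_neq0.
rewrite -mulr_sumr exchange_big /= (eq_bigr _ (fun x _ => sum_dg2 x)) sumr_const.
by rewrite -[_ *+ #|_|]mulr_natl; ring.
Qed.
End Kirchhoff.

Theorem proposition3p6 (R : realType) (V E : finType)
    (ends : E -> V * V) (len : E -> R)
    (len_pos : forall e, 0 < len e)
    (Gconn : connected_net ends [set: V] [set: E])
    (p : V) :
  2%:R * Kf ends len =
    #|V|%:R * y_inv ends len p
    + \sum_(e : E) weight ends len e *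
        \sum_(x in contr_V ends e) contr_res ends len e x (ends e).1.
Proof.
have n0 := natr_card_neq0 R p.
have /(canRL (addKr _)) P_E := Q_add_P len_pos Gconn.
rewrite (twice_Kf len_pos Gconn) (y_inv_green len_pos Gconn p).
rewrite (sum_weight_contr len_pos Gconn p) P_E.
by field.
Qed.
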